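(* Let $X(t)$, $t\in T$, be a separable centered Gaussian random function with $\rho(s,t)=(\mathbb{E}(X(t)-X(s))^2)^{1/2}$, $(T,\rho)$ relatively compact, and covering numbers $N(\varepsilon)$; let $\Psi$ be a function with $N(u)\le\Psi(u)$ for all $u>0$. Let $r\in(0,1)$, $\varepsilon>0$, $n\ge1$, and let $(\varepsilon_k)_{0\le k\le n}$ be a decreasing positive sequence with $\varepsilon_n=\varepsilon$ and $$\Psi(\varepsilon_k)\le r\,\Psi(\varepsilon_{k+1}),\qquad 1\le k\le n-1.$$ Set $b_k=r^{n-k}\varepsilon$ for $0\le k<n$. Then $$\prod_{k=0}^{n-1}\mathbb{P}(\varepsilon_k|\xi|\le b_k)^{N(\varepsilon_{k+1})}\ge\exp\big\{-C_4(r)\Psi(\varepsilon)-(1-r)^{-1}G\big\},$$ where $\xi$ is standard normal, $C_4(r)$ depends only on $r$, and $G=\sum_{\ell=1}^n(\log\varepsilon_{\ell-1}-\log\varepsilon_\ell)\Psi(\varepsilon_\ell)$.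
   Context: $N(\varepsilon)$ is the minimal number of points $t_1,\dots,t_n\in T$ such that every $t\in T$ has $\rho(t,t_i)\le\varepsilon$ for some $i$. *)

From HB Require Import structures.
From mathcomp Require Import all_boot all_order all_algebra.
From mathcomp Require Import all_classical all_reals all_analysis.
Set Implicit Arguments. Unset Strict Implicit. Unset Printing Implicit Defensive.
Import Order.TTheory GRing.Theory Num.Theory.
Import numFieldNormedType.Exports.
Local Open Scope classical_set_scope.
Local Open Scope ring_scope.

Section Defs.
Context {R : realType}.

Definition covers {T : Type} (rho : T -> T -> R) (eps : R) (n : nat) : Prop :=
  exists f : 'I_n -> T, forall t : T, exists i : 'I_n, rho t (f i) <= eps.

(* Covering number N(eps): minimal number of points of an eps-net
   (0 by convention if no finite eps-net exists; never used in that case). *)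
Definition covnum {T : Type} (rho : T -> T -> R) (eps : R) : nat :=
  match pselect (exists n, `[< covers rho eps n >]) with
  | left h => ex_minn h
  | right _ => 0%N
  end.

(* (T, rho) relatively compact = totally bounded: finite eps-nets for all eps > 0 *)
Definition totally_bounded {T : Type} (rho : T -> T -> R) : Prop :=
  forall eps : R, 0 < eps -> exists n, covers rho eps n.

Context {d : measure_display} {Omega : measurableType d} (P : probability Omega R).

Definition gdist {T : Type} (X : T -> Omega -> R) (s t : T) : R :=
  Num.sqrt (fine ('E_P[fun w => ((X t w - X s w) ^+ 2)%R])%E).

(* centered Gaussian random function: every finite linear combination
   sum_i c_i X(t_i) is a centered normal variable (possibly degenerate, i.e.
   a.s. equal to 0). *)
Definition centered_gaussian {T : Type} (X : T -> Omega -> R) : Prop :=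
  (forall t, measurable_fun setT (X t)) /\
  forall s : seq (T * R),
    let Y := fun w => \sum_(p <- s) p.2 * X p.1 w in
    (P (Y @^-1` [set 0]) = 1%E) \/
    exists sigma : R, 0 < sigma /\
      forall A : set R, measurable A -> P (Y @^-1` A) = normal_prob 0 sigma A.

(* separability (in Doob's sense, w.r.t. rho): there is a countable set S and a
   P-null set N such that outside N every value X t w is a limit of values
   X (u n) w along a sequence u of points of S converging to t. *)
Definition separable_rf {T : Type} (X : T -> Omega -> R) : Prop :=
  exists S : set T, countable S /\
  exists N : set Omega, P.-negligible N /\
    forall w, ~ N w -> forall t : T, exists u : nat -> T,
      (forall k, S (u k)) /\
      (gdist X (u k) t @[k --> \oo] --> 0) /\
      (X (u k) w @[k --> \oo] --> X t w).

End Defs.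

From HB Require Import structures.
From mathcomp Require Import all_boot all_order all_algebra.
From mathcomp Require Import all_classical all_reals all_analysis.
From mathcomp Require Import lra zify ring measurable_realfun.
Import Order.TTheory GRing.Theory Num.Theory.
Import numFieldNormedType.Exports.
Local Open Scope classical_set_scope.
Local Open Scope ring_scope.

(* Only the bound N <= Psi on the covering numbers enters.
   On [-a, a] with a <= 1 the standard normal density is at least
   peak * e^-1, so P(e_k |xi| <= b_k) >= c b_k / e_k.  Taking logarithms, the
   product is at least exp of
     sum_k N(e_(k+1)) (ln c + (n - k) ln r) - sum_k N(e_(k+1)) (ln e_k - ln e_n).
   The ratio condition gives N(e_(k+1)) <= r^(l-k-1) Psi(e_l) for l >= k + 1:
   with l = n the first sum is an arithmetico-geometric series in r times
   Psi(eps), and after Abel summation the second is at most G / (1 - r). *)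

Lemma sum_geom_arith (R : realType) (r A B : R) (n : nat) : r != 1 ->
  \sum_(k < n) r ^+ (n - k.+1) * (A + (n - k)%:R * B) =
  A * (1 - r ^+ n) / (1 - r) + B * ((1 - r ^+ n) / (1 - r) ^+ 2 - n%:R * r ^+ n / (1 - r)).
Proof.
move=> r1; have r1' : 1 - r != 0 by rewrite subr_eq0 eq_sym.
elim: n => [|n IH]; first by rewrite big_ord0 expr0; field.
rewrite big_ord_recl /= subn1 subn0.
under eq_bigr => i _ do rewrite /bump /= add1n subSS.
by rewrite IH succnK -natr1 (exprS r n); field.
Qed.

Lemma sum_geom_arith_le (R : realType) (r A B : R) (n : nat) :
  0 < r -> r < 1 -> 0 <= A -> 0 <= B ->
  \sum_(k < n) r ^+ (n - k.+1) * (A + (n - k)%:R * B) <= A / (1 - r) + B / (1 - r) ^+ 2.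
Proof.
move=> r0 r1 A0 B0; rewrite sum_geom_arith; last by rewrite lt_eqF.
have rn0 : 0 <= r ^+ n by rewrite exprn_ge0 // ltW.
have rn1 : r ^+ n <= 1 by rewrite exprn_ile1 // ltW.
have q0 : 0 < 1 - r by lra.
have n0 : 0 <= n%:R * r ^+ n / (1 - r) :> R by rewrite divr_ge0 ?mulr_ge0 // ltW.
apply: lerD.
  rewrite -mulrA ler_wpM2l //.
  have : (1 - r ^+ n) / (1 - r) <= 1 / (1 - r) by rewrite ler_pM2r ?invr_gt0 //; lra.
  by rewrite mul1r.
rewrite ler_wpM2l //.
have : (1 - r ^+ n) / (1 - r) ^+ 2 <= 1 / (1 - r) ^+ 2.
  by rewrite ler_pM2r ?invr_gt0 ?exprn_gt0 //; lra.
lra.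
Qed.

Lemma sum_geom_le (R : realType) (r : R) (n : nat) : 0 < r -> r < 1 ->
  \sum_(k < n) r ^+ (n - k.+1) <= (1 - r)^-1.
Proof.
move=> r0 r1; have := @sum_geom_arith_le R r 1 0 n r0 r1 ler01 (lexx 0).
by under eq_bigr => i _ do rewrite mulr0 addr0 mulr1; rewrite mul0r addr0 div1r.
Qed.

(* Abel summation: u_k - u_n = sum_(k < l <= n) (u_(l-1) - u_l), and the
   weights N_j with j <= l add up to at most Q_l / (1 - r). *)
Lemma abel_sum_geom_le (R : realType) (r : R) (u N Q : nat -> R) (n : nat) :
  0 < r -> r < 1 ->
  (forall l, (1 <= l <= n)%N -> u l <= u l.-1) ->
  (forall j, (1 <= j <= n)%N -> 0 <= N j) ->
  (forall j l, (1 <= j)%N -> (j <= l)%N -> (l <= n)%N -> N j <= r ^+ (l - j) * Q l) ->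
  \sum_(k < n) N k.+1 * (u k - u n) <= (1 - r)^-1 * \sum_(1 <= l < n.+1) (u l.-1 - u l) * Q l.
Proof.
move=> r0 r1; elim: n => [|n IH] u_decr N0 NQ; first by rewrite big_ord0 big_geq // mulr0.
have IHn := IH (fun l hl => u_decr l ltac:(lia)) (fun j hj => N0 j ltac:(lia))
  (fun j l h1 h2 h3 => NQ j l h1 h2 ltac:(lia)).
have -> : \sum_(k < n.+1) N k.+1 * (u k - u n.+1) =
   \sum_(k < n.+1) N k.+1 * (u k - u n) + (u n - u n.+1) * \sum_(k < n.+1) N k.+1.
  by rewrite mulr_sumr -big_split /=; apply: eq_bigr => i _; ring.
rewrite big_ord_recr /= subrr mulr0 addr0 big_nat_recr //= mulrDr.
apply: lerD => //.
have Q0 : 0 <= Q n.+1.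
  have := NQ n.+1 n.+1 isT (leqnn _) (leqnn _); rewrite subnn expr0 mul1r.
  by apply: le_trans; apply: N0; lia.
have du : 0 <= u n - u n.+1 by have := u_decr n.+1 ltac:(lia); rewrite /=; lra.
rewrite mulrCA ler_wpM2l //.
apply: (@le_trans _ _ (\sum_(k < n.+1) r ^+ (n.+1 - k.+1) * Q n.+1)).
  by apply: ler_sum => i _; have := NQ i.+1 n.+1 isT (ltn_ord i) (leqnn _).
by rewrite -mulr_suml mulrC [X in _ <= X]mulrC ler_wpM2l // sum_geom_le.
Qed.

Definition normal_ball_const (R : realType) : R := (normal_peak (1 : R) * expR (-1)) *+ 2.

Lemma normal_ball_const_gt0 (R : realType) : 0 < normal_ball_const R.
Proof.
by rewrite pmulrn_lgt0 // mulr_gt0 ?expR_gt0 // normal_peak_gt0 // oner_neq0.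
Qed.

Lemma normal_prob_itv_ge (R : realType) (a : R) : 0 < a -> a <= 1 ->
  ((a * normal_ball_const R)%:E <= normal_prob 0 1 `[(- a)%R, a]%classic)%E.
Proof.
move=> a0 a1; set c := normal_peak (1 : R) * expR (-1).
have -> : (a * normal_ball_const R)%:E = (\int[lebesgue_measure]_(x in `[(- a)%R, a]%classic) (cst c%:E) x)%E.
  rewrite integral_cst //.
  have := lebesgue_measure_itv (R:=R) `[(- a)%R, a].
  rewrite /= ifT ?lte_fin; last lra.
  by move=> ->; rewrite -EFinD -EFinM /normal_ball_const -/c; congr EFin; ring.
apply: ge0_le_integral => //.
- by move=> x _; rewrite lee_fin /c mulr_ge0 ?normal_peak_ge0 ?expR_ge0.
- by apply/measurable_EFinP; exact: measurable_funS (measurable_normal_pdf 0 1).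
move=> x /=; rewrite in_itv /= => /andP[xa ax].
rewrite lee_fin normal_pdfE ?oner_neq0 // /c ler_wpM2l ?normal_peak_ge0 //.
rewrite /normal_fun ler_expR subr0 expr1n -mulNr ler_pdivlMr; last lra.
nra.
Qed.

Lemma normal_prob_scaled_ball_ge (R : realType) (e b : R) : 0 < b -> b <= e ->
  b / e * normal_ball_const R <= fine (normal_prob 0 1 [set x : R | e * `|x| <= b]).
Proof.
move=> b0 be; have e0 : 0 < e by apply: lt_le_trans be.
have a0 : 0 < b / e by rewrite divr_gt0.
have a1 : b / e <= 1 by rewrite ler_pdivrMr // mul1r.
have -> : [set x : R | e * `|x| <= b] = `[(- (b / e))%R, b / e]%classic.
  by apply/seteqP; split => x /=; rewrite in_itv /= -ler_norml ler_pdivlMr // mulrC.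
have le1 := probability_le1 (normal_prob (0 : R) 1) (measurable_itv `[(- (b / e))%R, b / e]).
rewrite -lee_fin fineK ?(@normal_prob_itv_ge R) // ge0_fin_numE ?(le_lt_trans le1) ?ltry //.
Qed.

Definition small_ball_const {R : realType} (r : R) : R :=
  `|ln (normal_ball_const R)| / (1 - r) + `|ln r| / (1 - r) ^+ 2.

Section SmallBallProduct.
Variables (R : realType) (r : R) (n : nat) (e : nat -> R) (Psi : R -> R) (N : nat -> nat).
Hypotheses (r0 : 0 < r) (r1 : r < 1).
Hypothesis e_gt0 : forall k, (k <= n)%N -> 0 < e k.
Hypothesis e_decr : forall k, (k < n)%N -> e k.+1 < e k.
Hypothesis N_le_Psi : forall j, (j <= n)%N -> (N j)%:R <= Psi (e j).
Hypothesis Psi_ratio : forall k, (1 <= k)%N -> (k <= n.-1)%N -> Psi (e k) <= r * Psi (e k.+1).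

Let c := normal_ball_const R.

Lemma e_le {k l : nat} : (k <= l)%N -> (l <= n)%N -> e l <= e k.
Proof.
move=> kl ln; rewrite -(subnKC kl); have : (k + (l - k) <= n)%N by lia.
elim: (l - k)%N => [|m IH] km; first by rewrite addn0.
by rewrite addnS; apply: le_trans (IH ltac:(lia)); apply/ltW/e_decr; lia.
Qed.

Lemma N_le_geom {j l : nat} : (1 <= j)%N -> (j <= l)%N -> (l <= n)%N ->
  (N j)%:R <= r ^+ (l - j) * Psi (e l).
Proof.
move=> j1 jl ln; apply: le_trans (N_le_Psi _ (leq_trans jl ln)) _.
rewrite -(subnKC jl) addKn; have : (j + (l - j) <= n)%N by lia.
move: (l - j)%N => m; clear jl ln.
elim: m j j1 => [|m IH] i i1 im; first by rewrite addn0 expr0 mul1r.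
apply: le_trans (Psi_ratio _ i1 ltac:(lia)) _.
by rewrite exprS -mulrA ler_wpM2l ?(ltW r0) // -addSnnS; apply: IH; rewrite ?addSnnS.
Qed.

Lemma Psi_last_ge0 : 0 <= Psi (e n).
Proof. exact: le_trans (ler0n _ _) (N_le_Psi _ (leqnn n)). Qed.

Lemma ln_ball_ratio (k : nat) : (k <= n)%N ->
  ln (r ^+ (n - k) * e n / e k * c) = ln c + (n - k)%:R * ln r - (ln (e k) - ln (e n)).
Proof.
move=> kn; have ek := e_gt0 _ kn; have en := e_gt0 _ (leqnn n).
have c0 : 0 < c := normal_ball_const_gt0 R.
rewrite !lnM ?posrE ?mulr_gt0 ?divr_gt0 ?invr_gt0 ?exprn_gt0 //.
by rewrite lnV ?posrE // lnXn // mulr_natl; ring.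
Qed.

Lemma sum_ln_ball_const_ge :
  - small_ball_const r * Psi (e n) <= \sum_(k < n) (N k.+1)%:R * (ln c + (n - k)%:R * ln r).
Proof.
apply: (@le_trans _ _ (\sum_(k < n) - (r ^+ (n - k.+1) * (`|ln c| + (n - k)%:R * `|ln r|)) * Psi (e n))).
  rewrite -mulr_suml sumrN !mulNr lerN2 ler_wpM2r ?Psi_last_ge0 //.
  exact: sum_geom_arith_le.
apply: ler_sum => k _.
have lnv : - (`|ln c| + (n - k)%:R * `|ln r|) <= ln c + (n - k)%:R * ln r.
  rewrite opprD -mulrN lerD ?ler_wpM2l //; by rewrite lerNl -normrN ler_norm.
have W0 : 0 <= `|ln c| + (n - k)%:R * `|ln r| by rewrite addr_ge0 // mulr_ge0.
have Nk := @N_le_geom k.+1 n isT (ltn_ord k) (leqnn n).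
have := ler0n R (N k.+1); nra.
Qed.

Lemma sum_ln_decay_le :
  \sum_(k < n) (N k.+1)%:R * (ln (e k) - ln (e n)) <=
  (1 - r)^-1 * \sum_(1 <= l < n.+1) (ln (e l.-1) - ln (e l)) * Psi (e l).
Proof.
apply: (@abel_sum_geom_le R r (fun k => ln (e k)) (fun j => (N j)%:R) (fun l => Psi (e l)) n r0 r1)
  => [l /andP[l1 ln]||j l j1 jl ln].
- by rewrite ler_ln ?posrE ?e_gt0 ?e_le //; lia.
- by move=> j _; exact: ler0n.
- exact: N_le_geom.
Qed.

Lemma prod_normal_ball_ge :
  expR (- small_ball_const r * Psi (e n) -
        (1 - r)^-1 * \sum_(1 <= l < n.+1) (ln (e l.-1) - ln (e l)) * Psi (e l))
  <= \prod_(k < n)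
       fine (normal_prob 0 1 [set x : R | e k * `|x| <= r ^+ (n - k) * e n]) ^+ N k.+1.
Proof.
pose a (k : nat) := r ^+ (n - k) * e n / e k * c.
have a_gt0 (k : 'I_n) : 0 < a k.
  by rewrite mulr_gt0 ?normal_ball_const_gt0 // divr_gt0 ?mulr_gt0 ?exprn_gt0 ?e_gt0 // ltnW.
have a_le (k : 'I_n) : a k <= fine (normal_prob 0 1 [set x : R | e k * `|x| <= r ^+ (n - k) * e n]).
  apply: normal_prob_scaled_ball_ge; first by rewrite mulr_gt0 ?exprn_gt0 ?e_gt0.
  have kn := ltnW (ltn_ord k); have en := e_gt0 _ (leqnn n).
  rewrite -[X in _ <= X]mul1r ler_pM ?exprn_ge0 ?exprn_ile1 ?(e_le kn) ?(ltW r0) ?(ltW r1) ?(ltW en) //.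
apply: (@le_trans _ _ (\prod_(k < n) a k ^+ N k.+1)); last first.
  apply: ler_prod => k _; have ak := ltW (a_gt0 k).
  rewrite exprn_ge0 //= lerXn2r ?nnegrE ?a_le //; exact: le_trans ak (a_le k).
have -> : \prod_(k < n) a k ^+ N k.+1 = expR (\sum_(k < n) (N k.+1)%:R * ln (a k)).
  by rewrite expR_sum; apply: eq_bigr => k _; rewrite expRM_natl lnK ?posrE.
rewrite ler_expR /a /=.
under [X in _ <= X]eq_bigr => k _ do rewrite ln_ball_ratio 1?ltnW // mulrBr.
rewrite sumrB; apply: lerB; [exact: sum_ln_ball_const_ge | exact: sum_ln_decay_le].
Qed.

End SmallBallProduct.

Theorem lemma4 (R : realType) (r : R) (hr0 : 0 < r) (hr1 : r < 1) :
  exists C4 : R,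
  forall (d : measure_display) (Omega : measurableType d)
    (P : probability Omega R) (T : Type) (X : T -> Omega -> R),
  centered_gaussian P X ->
  separable_rf P X ->
  totally_bounded (gdist P X) ->
  forall (Psi : R -> R),
  (forall u : R, 0 < u -> ((covnum (gdist P X) u)%:R <= Psi u)) ->
  forall (eps : R) (n : nat) (e : nat -> R),
  0 < eps -> (1 <= n)%N ->
  (forall k : nat, (k <= n)%N -> 0 < e k) ->
  (forall k : nat, (k < n)%N -> e k.+1 < e k) ->
  e n = eps ->
  (forall k : nat, (1 <= k)%N -> (k <= n.-1)%N -> Psi (e k) <= r * Psi (e k.+1)) ->
  let b := fun k : nat => r ^+ (n - k) * eps in
  let G := \sum_(1 <= l < n.+1) (ln (e l.-1) - ln (e l)) * Psi (e l) in
  \prod_(k < n)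
     (fine (normal_prob 0 1 [set x : R | e k * `|x| <= b k])) ^+ (covnum (gdist P X) (e k.+1))
  >= expR (- C4 * Psi eps - (1 - r)^-1 * G).
Proof.
exists (small_ball_const r).
move=> d Omega P T X _ _ _ Psi N_le_Psi eps n e _ _ e_gt0 e_decr <- Psi_ratio /=.
apply: (@prod_normal_ball_ge R r n e Psi (fun j => covnum (gdist P X) (e j))) => // j jn.
exact/N_le_Psi/e_gt0.
Qed.
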